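(* Let $\nu\in\mathbb{C}$ and $a,b,x>0$. Then $$J_{\nu}(ax)J_{\nu}(bx)=\left(\frac{abx}{2\sqrt{a^2+b^2}}\right)^{\nu}\sum_{r=0}^{\infty}\frac{1}{r!\,\Gamma(\nu+r+1)}\left(\frac{abx}{2\sqrt{a^2+b^2}}\right)^{2r}J_{\nu+2r}\!\left(x\sqrt{a^2+b^2}\right).$$
   Context: $J_\nu$ is the Bessel function of the first kind of order $\nu$; $1/\Gamma$ is understood as the entire reciprocal Gamma function. *)

From Stdlib Require Import Reals Factorial.
From Coquelicot Require Import Coquelicot.
Open Scope R_scope.

Definition Cexp (z : C) : C :=
  (exp (Re z) * cos (Im z), exp (Re z) * sin (Im z)).

Definition Rcpow (t : R) (z : C) : C := Cexp (Cmult z (RtoC (ln t))).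

(* limit of a complex sequence (componentwise; meaningful when it converges) *)
Definition Clim_seq (u : nat -> C) : C :=
  (real (Lim_seq (fun n => Re (u n))), real (Lim_seq (fun n => Im (u n)))).

Definition CSeries (a : nat -> C) : C := Clim_seq (fun n => sum_n a n).

Fixpoint rising_prod (z : C) (n : nat) : C :=
  match n with
  | O => z
  | S m => Cmult (rising_prod z m) (Cplus z (RtoC (INR (S m))))
  end.

(* Entire reciprocal Gamma function via Gauss' formula:
   1/Gamma(z) = lim_{n->oo} z(z+1)...(z+n) / (n! n^z), valid for all z in C. *)
Definition rgamma (z : C) : C :=
  Clim_seq (fun n => Cdiv (rising_prod z n)
                          (Cmult (RtoC (INR (fact n))) (Rcpow (INR n) z))).

(* Bessel function of the first kind, for real argument x > 0:
   J_nu(x) = sum_k (-1)^k / (k! Gamma(nu+k+1)) (x/2)^(nu+2k). *)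
Definition BesselJ (nu : C) (x : R) : C :=
  Cmult (Rcpow (x / 2) nu)
    (CSeries (fun k => Cmult (RtoC ((-1) ^ k / INR (fact k) * (x / 2) ^ (2 * k)))
                             (rgamma (Cplus nu (RtoC (INR (S k))))))).

(* Put G_k = 1/Gamma(nu + k + 1), so that J_nu(y) = (y/2)^nu * sum_k G_k a^k / k! with
   a = -(y/2)^2, and G_k = (nu + 1 + k) G_(k+1).  From this recurrence and the Chu-Vandermonde
   identity for rising factorials one gets
     G_m G_n / (m! n!) = G_(m+n) * sum_r G_r / (r! (m-r)! (n-r)!).
   Hence, with A = -(ax/2)^2 and B = -(bx/2)^2, the part of total degree d of the Cauchy product
   of the series of J_nu(ax) and J_nu(bx) equals the sum over 2r + k = d of
   (AB)^r/r! (A+B)^k/k! G_r G_(2r+k); summing instead over r first gives the right-hand side,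
   because A + B = -(x sqrt(a^2+b^2)/2)^2 and AB is the square of the product of the two
   arguments abx/(2 sqrt(a^2+b^2)) and x sqrt(a^2+b^2)/2.  Both regroupings of the dominated double
   series are justified by Tannery's theorem.  The recurrence and the bound sup_k |G_k| < oo
   come from Gauss' product defining 1/Gamma, which converges because the ratio of its
   consecutive terms is 1 + O(1/n^2). *)

From Stdlib Require Import Reals Factorial Lra Lia.
From Coquelicot Require Import Coquelicot.
Open Scope R_scope.

Lemma Cexp_add (z w : C) : Cexp (z + w) = (Cexp z * Cexp w)%C.
Proof.
  destruct z as [a b], w as [c d]; unfold Cexp, Cmult, Cplus; simpl.
  rewrite exp_plus, cos_plus, sin_plus; f_equal; ring.
Qed.

Lemma Cexp_RtoC (r : R) : Cexp (RtoC r) = RtoC (exp r).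
Proof. unfold Cexp, RtoC; simpl; rewrite cos_0, sin_0; f_equal; ring. Qed.

Lemma Cexp_opp_mul (z : C) : (Cexp (- z) * Cexp z)%C = 1%C.
Proof.
  rewrite <- Cexp_add; replace (- z + z)%C with (RtoC 0) by ring.
  rewrite Cexp_RtoC, exp_0; reflexivity.
Qed.

Lemma Cexp_neq0 (z : C) : Cexp z <> 0%C.
Proof. intro Hz; pose proof (Cexp_opp_mul z) as H; rewrite Hz, Cmult_0_r in H; injection H; lra. Qed.

Lemma Cexp_opp (z : C) : Cexp (- z) = (/ Cexp z)%C.
Proof.
  pose proof (Cexp_neq0 z).
  rewrite <- (Cmult_1_l (/ Cexp z)), <- (Cexp_opp_mul z); field; assumption.
Qed.

Lemma RtoC_neq_0 (r : R) : r <> 0 -> RtoC r <> 0%C.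
Proof. intros Hr E; apply Hr; injection E; auto. Qed.

Lemma Rcpow_add (t : R) (z w : C) : Rcpow t (z + w) = (Rcpow t z * Rcpow t w)%C.
Proof. unfold Rcpow; rewrite <- Cexp_add; f_equal; ring. Qed.

Lemma Rcpow_mul (s t : R) (z : C) :
  0 < s -> 0 < t -> Rcpow (s * t) z = (Rcpow s z * Rcpow t z)%C.
Proof.
  intros hs ht; unfold Rcpow; rewrite <- Cexp_add, ln_mult, RtoC_plus by assumption.
  f_equal; ring.
Qed.

Lemma Rcpow_INR (t : R) (n : nat) : 0 < t -> Rcpow t (RtoC (INR n)) = RtoC (t ^ n).
Proof.
  intros ht; unfold Rcpow; rewrite <- RtoC_mult, Cexp_RtoC, <- Rpower_pow by assumption.
  reflexivity.
Qed.

Lemma exp_le_compat (x y : R) : x <= y -> exp x <= exp y.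
Proof.
  intros [hlt | ->]; [left; apply exp_increasing, hlt | right; reflexivity].
Qed.

Lemma MVT_from_0 (f df : R -> R) (b : R) :
  (forall c, is_derive f c (df c)) ->
  exists c, Rabs c <= Rabs b /\ f b - f 0 = df c * b.
Proof.
  intros Hf; destruct (MVT_cor4 f df 0 (Rabs b)) with (b := b) as [c [E Hc]].
  - intros c _; apply Hf.
  - rewrite Rminus_0_r; apply Rle_refl.
  - exists c; rewrite !Rminus_0_r in *; split; assumption.
Qed.

Lemma exp_sub_1_le (p : R) : Rabs (exp p - 1) <= Rabs p * exp (Rabs p).
Proof.
  destruct (MVT_from_0 exp exp p) as [c [Hc E]].
  { intros c; apply is_derive_Reals, derivable_pt_lim_exp. }
  rewrite exp_0 in E; rewrite E, Rabs_mult, Rmult_comm, (Rabs_pos_eq (exp c)) by (left; apply exp_pos).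
  apply Rmult_le_compat_l; [apply Rabs_pos|].
  apply exp_le_compat; eapply Rle_trans; [apply Rle_abs | exact Hc].
Qed.

Lemma exp_sub_1_sub_le (p : R) : Rabs (exp p - 1 - p) <= p ^ 2 * exp (Rabs p).
Proof.
  destruct (MVT_from_0 (fun y => exp y - y) (fun y => exp y - 1) p) as [c [Hc E]].
  { intros c; auto_derive; [exact I | ring]. }
  rewrite exp_0, Rminus_0_r in E; replace (exp p - 1 - p) with (exp p - p - 1) by ring.
  rewrite E, Rabs_mult, <- pow2_abs.
  assert (Hc' : Rabs (exp c - 1) <= Rabs p * exp (Rabs p)).
  { eapply Rle_trans; [apply exp_sub_1_le|].
    apply Rmult_le_compat; [apply Rabs_pos | left; apply exp_pos | exact Hc | apply exp_le_compat, Hc]. }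
  replace (Rabs p ^ 2 * exp (Rabs p)) with (Rabs p * exp (Rabs p) * Rabs p) by ring.
  apply Rmult_le_compat_r; [apply Rabs_pos | exact Hc'].
Qed.

Lemma sin_abs_le (q : R) : Rabs (sin q) <= Rabs q.
Proof.
  destruct (MVT_from_0 sin cos q) as [c [_ E]].
  { intros c; apply is_derive_Reals, derivable_pt_lim_sin. }
  rewrite sin_0, Rminus_0_r in E; rewrite E, Rabs_mult.
  pose proof (COS_bound c); pose proof (Rabs_pos q).
  assert (Rabs (cos c) <= 1) by (apply Rabs_le; lra); nra.
Qed.

Lemma cos_sub_1_le (q : R) : Rabs (cos q - 1) <= q ^ 2.
Proof.
  destruct (MVT_from_0 cos (fun y => - sin y) q) as [c [Hc E]].
  { intros c; apply is_derive_Reals, derivable_pt_lim_cos. }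
  rewrite cos_0 in E; rewrite E, Rabs_mult, Rabs_Ropp, <- pow2_abs.
  pose proof (sin_abs_le c); pose proof (Rabs_pos q); pose proof (Rabs_pos (sin c)); nra.
Qed.

Lemma sin_sub_le (q : R) : Rabs (sin q - q) <= Rabs q ^ 3.
Proof.
  destruct (MVT_from_0 (fun y => sin y - y) (fun y => cos y - 1) q) as [c [Hc E]].
  { intros c; auto_derive; [exact I | ring]. }
  rewrite sin_0, !Rminus_0_r in E; rewrite E, Rabs_mult.
  pose proof (cos_sub_1_le c) as Hcos; rewrite <- pow2_abs in Hcos.
  assert (Rabs c ^ 2 <= Rabs q ^ 2) by (apply pow_incr; split; [apply Rabs_pos | exact Hc]).
  pose proof (Rabs_pos q); pose proof (Rabs_pos (cos c - 1)); simpl in *; nra.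
Qed.

Lemma Cmod_le_Re_Im (z : C) : Cmod z <= Rabs (Re z) + Rabs (Im z).
Proof.
  destruct z as [p q]; simpl.
  replace (p, q) with (RtoC p + RtoC q * Ci)%C
    by (unfold RtoC, Ci, Cplus, Cmult; simpl; f_equal; ring).
  eapply Rle_trans; [apply Cmod_triangle|].
  rewrite Cmod_mult, Cmod_Ci, !Cmod_R, Rmult_1_r; apply Rle_refl.
Qed.

Lemma exp_cos_sub_le (p q : R) :
  Rabs (exp p * cos q - 1 - p) <= exp (Rabs p) * (p ^ 2 + q ^ 2).
Proof.
  replace (exp p * cos q - 1 - p) with (exp p * (cos q - 1) + (exp p - 1 - p)) by ring.
  eapply Rle_trans; [apply Rabs_triang|].
  rewrite Rabs_mult, (Rabs_pos_eq (exp p)) by (left; apply exp_pos).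
  assert (exp p <= exp (Rabs p)) by (apply exp_le_compat, Rle_abs).
  pose proof (cos_sub_1_le q); pose proof (exp_sub_1_sub_le p); pose proof (exp_pos p).
  pose proof (Rabs_pos (cos q - 1)); pose proof (pow2_ge_0 q); nra.
Qed.

Lemma exp_sin_sub_le (p q : R) :
  Rabs (exp p * sin q - q) <= exp (Rabs p) * (Rabs q ^ 3 + Rabs p * Rabs q).
Proof.
  replace (exp p * sin q - q) with (exp p * (sin q - q) + (exp p - 1) * q) by ring.
  eapply Rle_trans; [apply Rabs_triang|].
  rewrite !Rabs_mult, (Rabs_pos_eq (exp p)) by (left; apply exp_pos).
  assert (exp p <= exp (Rabs p)) by (apply exp_le_compat, Rle_abs).
  pose proof (sin_sub_le q); pose proof (exp_sub_1_le p); pose proof (exp_pos p).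
  pose proof (Rabs_pos q); pose proof (Rabs_pos (sin q - q)); pose proof (Rabs_pos (exp p - 1)); nra.
Qed.

Lemma Cexp_sub_1_sub_le (w : C) (rho : R) :
  Cmod w <= rho -> Cmod (Cexp w - 1 - w) <= Cmod w ^ 2 * ((2 + rho) * exp rho).
Proof.
  intros Hrho; destruct w as [p q]; set (r := Cmod (p, q)) in *.
  assert (hp : Rabs p <= r) by apply (re_le_Cmod (p, q)).
  assert (hq : Rabs q <= r) by (eapply Rle_trans; [apply Rmax_r | apply (Rmax_Cmod (p, q))]).
  assert (hr2 : r ^ 2 = p ^ 2 + q ^ 2) by apply (Cmod2_alt (p, q)).
  eapply Rle_trans; [apply Cmod_le_Re_Im|]; unfold Cexp; simpl.
  replace (exp p * cos q + - (1) + - p) with (exp p * cos q - 1 - p) by ring.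
  replace (exp p * sin q + - 0 + - q) with (exp p * sin q - q) by ring.
  assert (h0 : 0 <= r) by apply Cmod_ge_0.
  assert (Hq3 : Rabs q ^ 3 <= r ^ 2 * rho).
  { apply Rle_trans with (r ^ 3); [apply pow_incr; split; [apply Rabs_pos | exact hq]|].
    replace (r ^ 3) with (r ^ 2 * r) by ring; apply Rmult_le_compat_l; [apply pow2_ge_0 | exact Hrho]. }
  assert (Hpq : Rabs p * Rabs q <= r ^ 2)
    by (simpl; rewrite Rmult_1_r; apply Rmult_le_compat; auto using Rabs_pos).
  assert (HE : exp (Rabs p) <= exp rho) by (apply exp_le_compat; lra).
  apply Rle_trans with (exp rho * (p ^ 2 + q ^ 2) + exp rho * (Rabs q ^ 3 + Rabs p * Rabs q)).
  - pose proof (pow2_ge_0 p); pose proof (pow2_ge_0 q).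
    pose proof (pow_le (Rabs q) 3 (Rabs_pos q)); pose proof (Rmult_le_pos _ _ (Rabs_pos p) (Rabs_pos q)).
    apply Rplus_le_compat.
    + eapply Rle_trans; [apply exp_cos_sub_le | apply Rmult_le_compat_r; [lra | exact HE]].
    + eapply Rle_trans; [apply exp_sin_sub_le | apply Rmult_le_compat_r; [lra | exact HE]].
  - rewrite <- hr2; pose proof (exp_pos rho); nra.
Qed.

(* Coquelicot's generic sum lemmas state equalities in [AbelianMonoid.sort C_AbelianMonoid],
   which [ring] does not recognise as [C]. *)
Ltac Cring :=
  repeat change (plus ?a ?b) with (Cplus a b);
  lazymatch goal with |- ?a = ?b => change (@eq C a b); ring end.

Lemma sum_n_Cmult_l (a : C) (u : nat -> C) (n : nat) :
  sum_n (fun k => a * u k)%C n = (a * sum_n u n)%C.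
Proof. exact (sum_n_mult_l (K := C_Ring) a u n). Qed.

Lemma RtoC_sum_n (f : nat -> R) (n : nat) : RtoC (sum_n f n) = sum_n (fun k => RtoC (f k)) n.
Proof.
  induction n as [|n IH]; [rewrite !sum_O; reflexivity|].
  rewrite !sum_Sn, <- IH; apply RtoC_plus.
Qed.

Lemma Cmod_sum_n_m (a : nat -> C) (n m : nat) :
  Cmod (sum_n_m a n m) <= sum_n_m (fun k => Cmod (a k)) n m.
Proof. exact (norm_sum_n_m (K := C_AbsRing) (V := C_NormedModule) a n m). Qed.

Lemma sum_n_split (G : AbelianMonoid) (a : nat -> G) (I N : nat) :
  (I <= N)%nat -> sum_n a N = plus (sum_n a I) (sum_n_m a (S I) N).
Proof. intros h; apply sum_n_m_Chasles; lia. Qed.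

Lemma sum_n_succ_l (G : AbelianMonoid) (g : nat -> G) (n : nat) :
  sum_n g (S n) = plus (g O) (sum_n (fun k => g (S k)) n).
Proof. unfold sum_n; rewrite sum_Sn_m, <- sum_n_m_S by lia; reflexivity. Qed.

Lemma sum_n_zero_tail (G : AbelianMonoid) (g : nat -> G) (n d : nat) :
  (n <= d)%nat -> (forall m, (n < m <= d)%nat -> g m = zero) -> sum_n g d = sum_n g n.
Proof.
  intros hd Hg; induction d as [|d IH].
  - replace n with O by lia; reflexivity.
  - destruct (Nat.eq_dec n (S d)) as [->|hne]; [reflexivity|].
    rewrite sum_Sn, Hg, plus_zero_r by lia; apply IH; [lia | intros m hm; apply Hg; lia].
Qed.

Lemma sum_n_zero_head (G : AbelianMonoid) (g : nat -> G) (r k : nat) :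
  (forall m, (m < r)%nat -> g m = zero) -> sum_n g (r + k) = sum_n (fun j => g (r + j)%nat) k.
Proof.
  revert g; induction r as [|r IH]; intros g Hg; [reflexivity|].
  rewrite Nat.add_succ_l, sum_n_succ_l, Hg, plus_zero_l by lia.
  apply (IH (fun m => g (S m))); intros m hm; apply Hg; lia.
Qed.

Lemma sum_n_le_Series (a : nat -> R) (n : nat) :
  (forall k, 0 <= a k) -> ex_series a -> sum_n a n <= Series a.
Proof.
  intros Ha He.
  assert (Hlim : is_lim_seq (fun k => sum_n a (k + n)) (Series a))
    by (apply (is_lim_seq_incr_n (sum_n a) n), Series_correct, He).
  assert (Hincr : forall k, sum_n a n <= sum_n a (k + n)).
  { intros k; induction k as [|k IH]; [apply Rle_refl|].
    rewrite Nat.add_succ_l, sum_Sn; unfold plus; simpl; specialize (Ha (S (k + n))); lra. }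
  exact (is_lim_seq_le _ _ _ _ Hincr (is_lim_seq_const _) Hlim).
Qed.

Lemma is_series_telescoping (u : nat -> R) (l : R) :
  is_lim_seq u l -> is_series (fun n => u n - u (S n)) (u O - l).
Proof.
  intros Hu.
  assert (Hsum : forall n, sum_n (fun k => u k - u (S k)) n = u O - u (S n)).
  { induction n as [|n IH]; [rewrite sum_O; reflexivity|].
    rewrite sum_Sn, IH; unfold plus; simpl; ring. }
  enough (H : is_lim_seq (sum_n (fun k => u k - u (S k))) (u O - l)) by exact H.
  apply (is_lim_seq_ext (fun n => u O - u (S n))); [intros n; symmetry; apply Hsum|].
  apply (is_lim_seq_minus' _ _ (u O) l); [apply is_lim_seq_const | apply (is_lim_seq_incr_1 u l), Hu].
Qed.

Lemma is_lim_seq_inv_INR_S : is_lim_seq (fun n => / INR (S n)) 0.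
Proof.
  replace (Finite 0) with (Rbar_inv p_infty) by reflexivity.
  apply is_lim_seq_inv; [apply (is_lim_seq_incr_1 INR p_infty), is_lim_seq_INR | discriminate].
Qed.

Lemma ex_series_inv_sq : ex_series (fun n => (/ INR (S n)) ^ 2).
Proof.
  apply (ex_series_le (K := R_AbsRing) (V := R_CompleteNormedModule) _
           (fun n => 2 * (/ INR (S n) - / INR (S (S n))))).
  - intros n; change (Rabs ((/ INR (S n)) ^ 2) <= 2 * (/ INR (S n) - / INR (S (S n)))).
    rewrite Rabs_pos_eq by apply pow2_ge_0; rewrite (S_INR (S n)).
    assert (ha : 1 <= INR (S n)) by (rewrite S_INR; pose proof (pos_INR n); lra).
    set (a := INR (S n)) in *.
    replace (2 * (/ a - / (a + 1))) with ((/ a) ^ 2 + (a - 1) / (a * a * (a + 1))) by (field; lra).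
    assert (0 <= (a - 1) / (a * a * (a + 1))) by (apply Rdiv_le_0_compat; nra); lra.
  - apply (ex_series_scal_l (K := R_AbsRing) (V := R_NormedModule) 2
             (fun n => / INR (S n) - / INR (S (S n)))); eexists.
    apply (is_series_telescoping (fun n => / INR (S n))), is_lim_seq_inv_INR_S.
Qed.

Lemma is_series_exp (x : R) : is_series (fun k => x ^ k / INR (fact k)) (exp x).
Proof.
  eapply is_series_ext; [|exact (is_exp_Reals x)].
  intros k; change (scal (pow_n x k) (/ INR (fact k)) = x ^ k / INR (fact k)).
  rewrite pow_n_pow; reflexivity.
Qed.

Lemma binomial_div_fact (a b : R) (k : nat) :
  (a + b) ^ k / INR (fact k) =
  sum_n (fun j => a ^ j * b ^ (k - j) / (INR (fact j) * INR (fact (k - j)))) k.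
Proof.
  rewrite binomial, <- sum_n_Reals; unfold Rdiv.
  rewrite <- (sum_n_mult_r (K := R_Ring)); apply sum_n_ext_loc; intros j hj.
  unfold Binomial.C; change (mult ?x ?y) with (x * y).
  match goal with |- ?x = ?y => change (@eq R x y) end.
  pose proof (INR_fact_lt_0 k); pose proof (INR_fact_lt_0 j); pose proof (INR_fact_lt_0 (k - j)).
  field; lra.
Qed.

Definition is_Clim_seq (u : nat -> C) (l : C) : Prop := filterlim u eventually (locally l).

Lemma is_Clim_seq_spec (u : nat -> C) (l : C) :
  is_Clim_seq u l <-> forall eps : posreal, eventually (fun n => Cmod (u n - l) < eps).
Proof. unfold is_Clim_seq; rewrite (filterlim_locally_ball_norm (K := C_AbsRing)); reflexivity. Qed.

Lemma is_Clim_seq_const (l : C) : is_Clim_seq (fun _ => l) l.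
Proof. apply filterlim_const. Qed.

Lemma is_Clim_seq_ext_loc (u v : nat -> C) (l : C) :
  eventually (fun n => u n = v n) -> is_Clim_seq u l -> is_Clim_seq v l.
Proof. apply filterlim_ext_loc. Qed.

Lemma is_Clim_seq_plus (u v : nat -> C) (a b : C) :
  is_Clim_seq u a -> is_Clim_seq v b -> is_Clim_seq (fun n => u n + v n)%C (a + b)%C.
Proof. intros Hu Hv; exact (filterlim_comp_2 u v plus Hu Hv (filterlim_plus a b)). Qed.

Lemma is_Clim_seq_Cmod (u : nat -> C) (l : C) :
  is_Clim_seq u l <-> is_lim_seq (fun n => Cmod (u n - l)) 0.
Proof.
  rewrite is_Clim_seq_spec, <- is_lim_seq_spec; unfold is_lim_seq'.
  split; intros H eps; destruct (H eps) as [N HN]; exists N; intros n hn; specialize (HN n hn);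
    rewrite Rminus_0_r, Rabs_pos_eq in * by apply Cmod_ge_0; exact HN.
Qed.

Lemma is_Clim_seq_mult (u v : nat -> C) (a b : C) :
  is_Clim_seq u a -> is_Clim_seq v b -> is_Clim_seq (fun n => u n * v n)%C (a * b)%C.
Proof.
  rewrite !is_Clim_seq_Cmod; intros Hu Hv.
  apply is_lim_seq_le_le with (fun _ => 0)
    (fun n => Cmod (u n - a) * Cmod (v n - b) + Cmod a * Cmod (v n - b) + Cmod b * Cmod (u n - a)).
  - intros n; split; [apply Cmod_ge_0|].
    replace (u n * v n - a * b)%C with ((u n - a) * (v n - b) + a * (v n - b) + b * (u n - a))%C by ring.
    eapply Rle_trans; [apply Cmod_triangle|]; rewrite !Cmod_mult; apply Rplus_le_compat_r.
    eapply Rle_trans; [apply Cmod_triangle|]; rewrite !Cmod_mult; apply Rle_refl.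
  - apply is_lim_seq_const.
  - replace (Finite 0) with (Finite (0 * 0 + Cmod a * 0 + Cmod b * 0)) by (f_equal; ring).
    repeat apply is_lim_seq_plus'; try apply is_lim_seq_mult'; auto; apply is_lim_seq_const.
Qed.

Lemma is_Clim_seq_unique (u : nat -> C) (a b : C) : is_Clim_seq u a -> is_Clim_seq u b -> a = b.
Proof.
  apply (filterlim_locally_unique (K := C_AbsRing) (V := C_NormedModule)).
Qed.

Lemma is_Clim_seq_incr_n (u : nat -> C) (k : nat) (l : C) :
  is_Clim_seq (fun n => u (n + k)%nat) l <-> is_Clim_seq u l.
Proof.
  rewrite !is_Clim_seq_spec; split; intros H eps; destruct (H eps) as [N HN].
  - exists (N + k)%nat; intros n hn; replace n with (n - k + k)%nat by lia; apply HN; lia.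
  - exists N; intros n hn; apply HN; lia.
Qed.

Lemma is_lim_seq_Re (u : nat -> C) (l : C) :
  is_Clim_seq u l -> is_lim_seq (fun n => Re (u n)) (Re l).
Proof.
  rewrite is_Clim_seq_spec, <- is_lim_seq_spec; intros H eps; destruct (H eps) as [N HN].
  exists N; intros n hn; eapply Rle_lt_trans; [apply (re_le_Cmod (u n - l)%C) | apply HN, hn].
Qed.

Lemma is_lim_seq_Im (u : nat -> C) (l : C) :
  is_Clim_seq u l -> is_lim_seq (fun n => Im (u n)) (Im l).
Proof.
  rewrite is_Clim_seq_spec, <- is_lim_seq_spec; intros H eps; destruct (H eps) as [N HN].
  exists N; intros n hn; eapply Rle_lt_trans; [|apply HN, hn].
  eapply Rle_trans; [apply Rmax_r | apply (Rmax_Cmod (u n - l)%C)].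
Qed.

Lemma Clim_seq_correct (u : nat -> C) (l : C) : is_Clim_seq u l -> Clim_seq u = l.
Proof.
  intros H; unfold Clim_seq.
  rewrite (is_lim_seq_unique _ _ (is_lim_seq_Re u l H)), (is_lim_seq_unique _ _ (is_lim_seq_Im u l H)).
  destruct l; reflexivity.
Qed.

Lemma CSeries_correct (a : nat -> C) (l : C) : is_series a l -> CSeries a = l.
Proof. apply Clim_seq_correct. Qed.

Lemma CSeries_ext (a b : nat -> C) : (forall k, a k = b k) -> CSeries a = CSeries b.
Proof.
  intros H; unfold CSeries, Clim_seq.
  rewrite (Lim_seq_ext (fun n => Re (sum_n a n)) (fun n => Re (sum_n b n))),
    (Lim_seq_ext (fun n => Im (sum_n a n)) (fun n => Im (sum_n b n))); try reflexivity;
    intros n; rewrite (sum_n_ext a b n H); reflexivity.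
Qed.

Lemma is_Clim_seq_Cmod_le (u : nat -> C) (l : C) (b : R) :
  is_Clim_seq u l -> (forall n, Cmod (u n) <= b) -> Cmod l <= b.
Proof.
  intros H Hb; apply Rnot_lt_le; intros Hlt.
  destruct (proj1 (is_Clim_seq_spec u l) H (mkposreal (Cmod l - b) ltac:(lra))) as [N HN].
  specialize (HN N (le_n N)); specialize (Hb N); simpl in HN.
  pose proof (Cmod_triangle (u N) (l - u N)) as T.
  replace (u N + (l - u N))%C with l in T by ring.
  rewrite <- Cmod_opp in HN; replace (- (u N - l))%C with (l - u N)%C in HN by ring; lra.
Qed.

Lemma is_Clim_seq_sum_n (f : nat -> nat -> C) (F : nat -> C) (I : nat) :
  (forall i, is_Clim_seq (fun N => f N i) (F i)) ->
  is_Clim_seq (fun N => sum_n (f N) I) (sum_n F I).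
Proof.
  intros Hf; induction I as [|I IH].
  - rewrite sum_O; apply (is_Clim_seq_ext_loc (fun N => f N O)); [|apply Hf].
    exists O; intros; rewrite sum_O; reflexivity.
  - rewrite sum_Sn; apply (is_Clim_seq_ext_loc (fun N => sum_n (f N) I + f N (S I))%C);
      [exists O; intros; rewrite sum_Sn; reflexivity|].
    apply is_Clim_seq_plus; [exact IH | apply Hf].
Qed.

Lemma is_Clim_seq_inv_INR : is_Clim_seq (fun n => RtoC (/ INR n)) 0%C.
Proof.
  apply (is_Clim_seq_incr_n _ 1), is_Clim_seq_Cmod.
  apply (is_lim_seq_ext (fun n => / INR (S n))); [|exact is_lim_seq_inv_INR_S].
  intros n; rewrite Nat.add_1_r; replace (RtoC (/ INR (S n)) - 0)%C with (RtoC (/ INR (S n))) by ring.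
  rewrite Cmod_R, Rabs_pos_eq; [reflexivity|]; left; apply Rinv_0_lt_compat, lt_0_INR; lia.
Qed.

Lemma is_series_Cmult_l (k : C) (a : nat -> C) (l : C) :
  is_series a l -> is_series (fun n => k * a n)%C (k * l)%C.
Proof. exact (is_series_scal_l (K := C_AbsRing) (V := C_NormedModule) k a l). Qed.

Lemma is_series_Cmult_r (a : nat -> C) (l k : C) :
  is_series a l -> is_series (fun n => a n * k)%C (l * k)%C.
Proof.
  intros H; rewrite Cmult_comm; apply (is_series_ext (fun n => scal k (a n))).
  - intros n; apply Cmult_comm.
  - exact (is_series_scal_l (K := C_AbsRing) (V := C_NormedModule) k a l H).
Qed.

Lemma is_series_unique_C (a : nat -> C) (l l' : C) : is_series a l -> is_series a l' -> l = l'.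
Proof. apply is_Clim_seq_unique. Qed.

Lemma ex_Clim_seq_product (v e : nat -> C) :
  (forall n, v (S n) = (v n * (1 + e n))%C) -> ex_series (fun n => Cmod (e n)) ->
  exists l, is_Clim_seq v l.
Proof.
  intros Hv He.
  set (M := Cmod (v O) * exp (Series (fun n => Cmod (e n)))).
  assert (HM : forall n, Cmod (v n) <= M).
  { assert (Hgrowth : forall n,
               Cmod (v n) <= Cmod (v O) * exp (sum_n (fun k => Cmod (e k)) n - Cmod (e n))).
    { induction n as [|n IH].
      - rewrite sum_O, Rminus_diag, exp_0, Rmult_1_r; apply Rle_refl.
      - rewrite Hv, Cmod_mult, sum_Sn; unfold plus; simpl.
        replace (sum_n (fun k => Cmod (e k)) n + Cmod (e (S n)) - Cmod (e (S n)))
          with ((sum_n (fun k => Cmod (e k)) n - Cmod (e n)) + Cmod (e n)) by ring.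
        rewrite exp_plus, <- Rmult_assoc.
        apply Rmult_le_compat; [apply Cmod_ge_0 | apply Cmod_ge_0 | exact IH |].
        eapply Rle_trans; [apply Cmod_triangle|]; rewrite Cmod_1; apply exp_ineq1_le. }
    intros n; eapply Rle_trans; [apply Hgrowth|]; apply Rmult_le_compat_l; [apply Cmod_ge_0|].
    apply exp_le_compat; pose proof (Cmod_ge_0 (e n)).
    pose proof (sum_n_le_Series (fun k => Cmod (e k)) n (fun k => Cmod_ge_0 _) He); lra. }
  destruct (ex_series_le (K := C_AbsRing) (V := C_CompleteNormedModule)
              (fun n => v (S n) - v n)%C (fun n => M * Cmod (e n))) as [d Hd].
  - intros n; change (Cmod (v (S n) - v n) <= M * Cmod (e n)).
    rewrite Hv; replace (v n * (1 + e n) - v n)%C with (v n * e n)%C by ring.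
    rewrite Cmod_mult; apply Rmult_le_compat_r; [apply Cmod_ge_0 | apply HM].
  - apply (ex_series_scal_l (K := R_AbsRing) (V := R_NormedModule) M (fun n => Cmod (e n))), He.
  - exists (v O + d)%C; apply (is_Clim_seq_incr_n v 1).
    apply (is_Clim_seq_ext_loc (fun n => v O + sum_n (fun k => v (S k) - v k) n)%C).
    + exists O; intros n _; rewrite Nat.add_1_r; induction n as [|n IH].
      * rewrite sum_O; ring.
      * rewrite sum_Sn; change (plus ?a ?b) with (a + b)%C; rewrite Cplus_assoc, IH; ring.
    + apply is_Clim_seq_plus; [apply is_Clim_seq_const | exact Hd].
Qed.

(** * Gauss' product and the recurrence of the reciprocal Gamma function *)

Lemma ln_S_sub_ln_bounds (n : nat) : (1 <= n)%nat ->
  / INR (S n) <= ln (INR (S n)) - ln (INR n) <= / INR n.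
Proof.
  intros hn; assert (h0 : 0 < INR n) by (apply lt_0_INR; lia).
  rewrite S_INR.
  assert (Hln : forall y, 0 < y -> ln y <= y - 1)
    by (intros y hy; pose proof (exp_ineq1_le (ln y)); rewrite exp_ln in *; lra).
  split.
  - pose proof (Hln (INR n / (INR n + 1)) ltac:(apply Rdiv_lt_0_compat; lra)) as H.
    rewrite ln_div in H by lra.
    replace (INR n / (INR n + 1) - 1) with (- / (INR n + 1)) in H by (field; lra); lra.
  - pose proof (Hln ((INR n + 1) / INR n) ltac:(apply Rdiv_lt_0_compat; lra)) as H.
    rewrite ln_div in H by lra.
    replace ((INR n + 1) / INR n - 1) with (/ INR n) in H by (field; lra); exact H.
Qed.

(* Applied with s = 1/(n+1), L = ln (n+1) - ln n and t = 1/n, this bounds the ratio of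
   consecutive terms of Gauss' sequence by 1 + O(1/n^2). *)
Lemma gauss_factor_bound (z : C) : exists K, forall s L t : R,
  0 < s <= L -> L <= t <= 1 -> t - s <= t ^ 2 ->
  Cmod ((1 + z * RtoC s) * Cexp (- (z * RtoC L)) - 1) <= K * t ^ 2.
Proof.
  set (m := Cmod z); set (Phi := (2 + m) * exp m).
  assert (hm : 0 <= m) by apply Cmod_ge_0.
  assert (hPhi : 0 <= Phi) by (pose proof (exp_pos m); unfold Phi; nra).
  exists (m + m ^ 2 + (m ^ 2 + m ^ 3) * Phi); intros s L t hs hL hst.
  set (w := (- (z * RtoC L))%C); set (Rm := (Cexp w - 1 - w)%C).
  (* Each summand is O(t^2): z (s - L) as L - s <= t - s, Rm by the Taylor bound, and
     z s (w + Rm) as s <= t and |w| <= |z| t. *)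
  replace ((1 + z * RtoC s) * Cexp w - 1)%C with (z * RtoC (s - L) + Rm + z * RtoC s * (w + Rm))%C
    by (unfold Rm, w; rewrite RtoC_minus; ring).
  assert (Hw : Cmod w <= m * t).
  { unfold w; rewrite Cmod_opp, Cmod_mult, Cmod_R, Rabs_pos_eq by lra.
    apply Rmult_le_compat_l; lra. }
  assert (HRm : Cmod Rm <= m ^ 2 * Phi * t ^ 2).
  { eapply Rle_trans; [apply (Cexp_sub_1_sub_le w m); nra|]; fold Phi.
    replace (m ^ 2 * Phi * t ^ 2) with ((m * t) ^ 2 * Phi) by ring.
    apply Rmult_le_compat_r; [exact hPhi|].
    pose proof (Cmod_ge_0 w); apply pow_incr; lra. }
  assert (H1 : Cmod (z * RtoC (s - L)) <= m * t ^ 2).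
  { rewrite Cmod_mult, Cmod_R, Rabs_left1 by lra; apply Rmult_le_compat_l; lra. }
  assert (H2 : Cmod (z * RtoC s * (w + Rm)) <= m * t * (m * t + m ^ 2 * Phi * t ^ 2)).
  { rewrite !Cmod_mult, Cmod_R, Rabs_pos_eq by lra.
    fold m; apply Rmult_le_compat; [nra | apply Cmod_ge_0 | apply Rmult_le_compat_l; lra |].
    eapply Rle_trans; [apply Cmod_triangle | lra]. }
  assert (H3 : m * t * (m * t + m ^ 2 * Phi * t ^ 2) <= (m ^ 2 + m ^ 3 * Phi) * t ^ 2).
  { assert (0 <= t) by lra.
    assert (0 <= m ^ 3 * Phi * t ^ 2 * (1 - t))
      by (apply Rmult_le_pos; [apply Rmult_le_pos; [apply Rmult_le_pos|]; try apply pow_le | ]; lra).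
    simpl in *; nra. }
  pose proof (Cmod_triangle (z * RtoC (s - L) + Rm) (z * RtoC s * (w + Rm))).
  pose proof (Cmod_triangle (z * RtoC (s - L)) Rm).
  nra.
Qed.

Definition gauss_seq (z : C) (n : nat) : C :=
  (rising_prod z n / (RtoC (INR (fact n)) * Rcpow (INR n) z))%C.

Lemma gauss_seq_succ (z : C) (n : nat) : (1 <= n)%nat ->
  gauss_seq z (S n) =
  (gauss_seq z n * ((1 + z * RtoC (/ INR (S n))) * Cexp (- (z * RtoC (ln (INR (S n)) - ln (INR n))))))%C.
Proof.
  intros hn; unfold gauss_seq.
  assert (h0 : 0 < INR n) by (apply lt_0_INR; lia).
  assert (h1 : INR (S n) <> 0) by (apply not_0_INR; lia).
  set (L := ln (INR (S n)) - ln (INR n)).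
  assert (Hpow : Rcpow (INR (S n)) z = (Rcpow (INR n) z * Cexp (z * RtoC L))%C).
  { unfold Rcpow, L; rewrite <- Cexp_add, RtoC_minus; f_equal; ring. }
  change (rising_prod z (S n)) with (rising_prod z n * (z + RtoC (INR (S n))))%C.
  rewrite Hpow, Cexp_opp, fact_simpl, mult_INR, RtoC_mult, RtoC_inv by exact h1.
  pose proof (Cexp_neq0 (z * RtoC L)); pose proof (Cexp_neq0 (z * RtoC (ln (INR n)))).
  assert (RtoC (INR (fact n)) <> 0%C) by (apply RtoC_neq_0, INR_fact_neq_0).
  assert (RtoC (INR (S n)) <> 0%C) by (apply RtoC_neq_0, h1).
  unfold Rcpow in *; field; repeat split; assumption.
Qed.

Lemma ex_Clim_gauss_seq (z : C) : exists l, is_Clim_seq (gauss_seq z) l.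
Proof.
  destruct (gauss_factor_bound z) as [K HK].
  set (e := fun n => ((1 + z * RtoC (/ INR (S (S n))))
                      * Cexp (- (z * RtoC (ln (INR (S (S n))) - ln (INR (S n))))) - 1)%C).
  destruct (ex_Clim_seq_product (fun n => gauss_seq z (S n)) e) as [l Hl].
  - intros n; rewrite gauss_seq_succ by lia; unfold e; f_equal; ring.
  - apply (ex_series_le (K := R_AbsRing) (V := R_CompleteNormedModule) _
             (fun n => K * (/ INR (S n)) ^ 2)).
    + intros n; change (Rabs (Cmod (e n)) <= K * (/ INR (S n)) ^ 2).
      rewrite Rabs_pos_eq by apply Cmod_ge_0.
      assert (h1 : 0 < INR (S n)) by (apply lt_0_INR; lia).
      assert (h2 : INR (S n) < INR (S (S n))) by (apply lt_INR; lia).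
      destruct (ln_S_sub_ln_bounds (S n)) as [HL1 HL2]; [lia|].
      apply HK.
      * split; [apply Rinv_0_lt_compat; lra | exact HL1].
      * split; [exact HL2|]; rewrite <- Rinv_1; apply Rinv_le_contravar; [lra|].
        rewrite S_INR; pose proof (pos_INR n); lra.
      * rewrite (S_INR (S n)); set (a := INR (S n)) in *.
        replace (/ a - / (a + 1)) with (/ a * / (a + 1)) by (field; lra).
        replace ((/ a) ^ 2) with (/ a * / a) by ring.
        apply Rmult_le_compat_l; [left; apply Rinv_0_lt_compat, h1|].
        apply Rinv_le_contravar; lra.
    + apply (ex_series_scal_l (K := R_AbsRing) (V := R_NormedModule) K), ex_series_inv_sq.
  - exists l; apply (is_Clim_seq_incr_n _ 1); eapply is_Clim_seq_ext_loc; [|exact Hl].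
    exists O; intros n _; rewrite Nat.add_1_r; reflexivity.
Qed.

Lemma rgamma_correct (z : C) : is_Clim_seq (gauss_seq z) (rgamma z).
Proof.
  destruct (ex_Clim_gauss_seq z) as [l Hl].
  unfold rgamma; fold (gauss_seq z); rewrite (Clim_seq_correct _ _ Hl); exact Hl.
Qed.

Lemma rising_prod_shift (z : C) (n : nat) :
  (z * rising_prod (z + 1) n = rising_prod z n * (z + 1 + RtoC (INR n)))%C.
Proof.
  induction n as [|n IH]; cbn [rising_prod].
  - rewrite INR_0; ring.
  - rewrite Cmult_assoc, IH, S_INR, RtoC_plus; ring.
Qed.

Lemma rgamma_succ (z : C) : rgamma z = (z * rgamma (z + 1))%C.
Proof.
  apply (is_Clim_seq_unique (fun n => gauss_seq z n * (1 + (z + 1) * RtoC (/ INR n)))%C).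
  - replace (rgamma z) with (rgamma z * (1 + (z + 1) * 0))%C by ring.
    apply is_Clim_seq_mult; [apply rgamma_correct|].
    apply is_Clim_seq_plus; [apply is_Clim_seq_const|].
    apply is_Clim_seq_mult; [apply is_Clim_seq_const | apply is_Clim_seq_inv_INR].
  - apply (is_Clim_seq_ext_loc (fun n => z * gauss_seq (z + 1) n)%C).
    + exists 1%nat; intros n hn; unfold gauss_seq.
      assert (h0 : INR n <> 0) by (apply not_0_INR; lia).
      rewrite Rcpow_add, (Rcpow_INR _ 1) by (apply lt_0_INR; lia).
      unfold Cdiv; rewrite Cmult_assoc, rising_prod_shift, RtoC_inv, pow_1 by exact h0.
      pose proof (Cexp_neq0 (z * RtoC (ln (INR n)))); pose proof (RtoC_neq_0 _ h0).
      pose proof (RtoC_neq_0 _ (INR_fact_neq_0 n)).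
      unfold Rcpow in *; field; repeat split; assumption.
    + apply is_Clim_seq_mult; [apply is_Clim_seq_const | apply rgamma_correct].
Qed.

Lemma bounded_of_eventually_nonincreasing (u : nat -> R) (K : nat) :
  (forall j, (K <= j)%nat -> u (S j) <= u j) -> exists M, forall j, u j <= M.
Proof.
  intros Hdec.
  assert (Hinit : forall n, exists M, forall j, (j <= n)%nat -> u j <= M).
  { induction n as [|n [M HM]].
    - exists (u O); intros j hj; replace j with O by lia; apply Rle_refl.
    - exists (Rmax M (u (S n))); intros j hj; destruct (Nat.eq_dec j (S n)) as [->|hne].
      + apply Rmax_r.
      + eapply Rle_trans; [apply HM; lia | apply Rmax_l]. }
  destruct (Hinit K) as [M HM]; exists M; intros j.
  destruct (Nat.le_gt_cases j K) as [hj|hj]; [apply HM, hj|].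
  replace j with (K + (j - K))%nat by lia; induction (j - K)%nat as [|t IH].
  - rewrite Nat.add_0_r; apply HM; lia.
  - rewrite Nat.add_succ_r; eapply Rle_trans; [apply Hdec; lia | exact IH].
Qed.

Lemma rgamma_shift_rec (nu : C) (j : nat) :
  rgamma (nu + RtoC (INR (S j))) = ((nu + 1 + RtoC (INR j)) * rgamma (nu + RtoC (INR (S (S j)))))%C.
Proof.
  rewrite rgamma_succ, (S_INR (S j)), (S_INR j), !RtoC_plus.
  f_equal; [ring | f_equal; ring].
Qed.

Lemma rgamma_shift_bounded (nu : C) : exists M, forall j, Cmod (rgamma (nu + RtoC (INR (S j)))) <= M.
Proof.
  destruct (INR_unbounded (Cmod nu)) as [K HK].
  apply (bounded_of_eventually_nonincreasing (fun j => Cmod (rgamma (nu + RtoC (INR (S j))))) K).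
  intros j hj; rewrite (rgamma_shift_rec nu j), Cmod_mult.
  assert (H1 : 1 <= Cmod (nu + 1 + RtoC (INR j))).
  { pose proof (Cmod_triangle (nu + 1 + RtoC (INR j)) (- nu)) as T.
    replace (nu + 1 + RtoC (INR j) + - nu)%C with (RtoC (INR j + 1)) in T by (rewrite RtoC_plus; ring).
    rewrite Cmod_R, Cmod_opp, Rabs_pos_eq in T by (pose proof (pos_INR j); lra).
    pose proof (le_INR _ _ hj); lra. }
  pose proof (Cmod_ge_0 (rgamma (nu + RtoC (INR (S (S j)))))); nra.
Qed.

(** * Tannery's theorem and summation along diagonals *)

Theorem tannery (f : nat -> nat -> C) (F : nat -> C) (M : nat -> R) (l : C) :
  (forall i, is_Clim_seq (fun N => f N i) (F i)) ->
  (forall N i, Cmod (f N i) <= M i) -> ex_series M -> is_series F l ->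
  is_Clim_seq (fun N => sum_n (f N) N) l.
Proof.
  intros Hf HM HMs HF; rewrite is_Clim_seq_spec; intros eps.
  assert (he : 0 < eps / 3) by (pose proof (cond_pos eps); lra).
  assert (HM0 : forall i, 0 <= M i) by (intros i; eapply Rle_trans; [apply Cmod_ge_0 | apply (HM O)]).
  destruct (proj2 (is_lim_seq_spec (sum_n M) (Series M)) (Series_correct _ HMs) (mkposreal _ he))
    as [I1 HI1].
  destruct (proj1 (is_Clim_seq_spec (sum_n F) l) HF (mkposreal _ he)) as [I2 HI2].
  set (I := Nat.max I1 I2).
  destruct (proj1 (is_Clim_seq_spec _ _) (is_Clim_seq_sum_n f F I Hf) (mkposreal _ he)) as [N0 HN0].
  exists (Nat.max N0 I); intros N hN; simpl in *.
  specialize (HI1 I ltac:(lia)); specialize (HI2 I ltac:(lia)); specialize (HN0 N ltac:(lia)).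
  rewrite Rabs_minus_sym, Rabs_pos_eq in HI1 by (pose proof (sum_n_le_Series M I HM0 HMs); lra).
  rewrite (sum_n_split _ (f N) I N) by lia; change (plus ?a ?b) with (a + b)%C.
  set (tail := sum_n_m (f N) (S I) N).
  assert (Htail : Cmod tail <= Series M - sum_n M I).
  { eapply Rle_trans; [apply Cmod_sum_n_m|]; eapply Rle_trans; [apply sum_n_m_le; intros k; apply HM|].
    pose proof (sum_n_split _ M I N ltac:(lia)) as Hsplit; change (plus ?a ?b) with (a + b) in Hsplit.
    pose proof (sum_n_le_Series M N HM0 HMs).
    change (sum_n_m (fun k => M k) (S I) N) with (sum_n_m M (S I) N); lra. }
  replace (sum_n (f N) I + tail - l)%C
    with ((sum_n (f N) I - sum_n F I) + tail + (sum_n F I - l))%C by ring.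
  eapply Rle_lt_trans; [apply Cmod_triangle|].
  pose proof (Cmod_triangle (sum_n (f N) I - sum_n F I)%C tail).
  lra.
Qed.

(* diag_sum w u d is the sum of u i j over w i + j = d; w = 1 is the Cauchy product. *)
Definition diag_sum (w : nat) (u : nat -> nat -> C) (d : nat) : C :=
  sum_n (fun i => if (w * i <=? d)%nat then u i (d - w * i)%nat else RtoC 0) d.

Lemma sum_n_diag_sum (w : nat) (u : nat -> nat -> C) (N : nat) : (1 <= w)%nat ->
  sum_n (diag_sum w u) N =
  sum_n (fun i => if (w * i <=? N)%nat then sum_n (u i) (N - w * i) else RtoC 0) N.
Proof.
  intros hw.
  set (t := (fun N i => if (w * i <=? N)%nat then sum_n (u i) (N - w * i) else RtoC 0)
              : nat -> nat -> C).
  change (sum_n (diag_sum w u) N = sum_n (t N) N).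
  set (dd := fun D i => if (w * i <=? D)%nat then u i (D - w * i)%nat else RtoC 0).
  assert (Hstep : forall M i, t (S M) i = (t M i + dd (S M) i)%C).
  { intros M i; unfold t, dd.
    destruct (Nat.leb_spec (w * i) M), (Nat.leb_spec (w * i) (S M)); try lia.
    - replace (S M - w * i)%nat with (S (M - w * i)) by lia; rewrite sum_Sn; reflexivity.
    - replace (w * i)%nat with (S M) by lia; rewrite Nat.sub_diag, sum_O; ring.
    - ring. }
  induction N as [|N IH].
  - unfold diag_sum, t; rewrite !sum_O; reflexivity.
  - rewrite sum_Sn, IH, (sum_n_ext _ (fun i => plus (t N i) (dd (S N) i)) _ (Hstep N)).
    rewrite sum_n_plus, (sum_Sn (t N)).
    replace (t N (S N)) with (RtoC 0)
      by (unfold t; destruct (Nat.leb_spec (w * S N) N); [nia | reflexivity]).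
    change plus with Cplus; rewrite Cplus_0_r; reflexivity.
Qed.

Theorem is_series_diag_sum (w : nat) (u : nat -> nat -> C) (U : nat -> C) (alpha beta : nat -> R) :
  (1 <= w)%nat -> (forall i, 0 <= alpha i) -> (forall j, 0 <= beta j) ->
  (forall i j, Cmod (u i j) <= alpha i * beta j) -> ex_series alpha -> ex_series beta ->
  (forall i, is_series (u i) (U i)) ->
  exists l, is_series U l /\ is_series (diag_sum w u) l.
Proof.
  intros hw Ha Hb Hu Hsa Hsb HU; set (B := Series beta).
  assert (HB : 0 <= B).
  { pose proof (sum_n_le_Series beta O Hb Hsb) as Hb0; rewrite sum_O in Hb0; fold B in Hb0.
    pose proof (Hb O); lra. }
  assert (Hpart : forall i n, Cmod (sum_n (u i) n) <= alpha i * B).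
  { intros i n; eapply Rle_trans; [apply Cmod_sum_n_m|].
    eapply Rle_trans; [apply sum_n_m_le; intros j; apply Hu|].
    change (sum_n (fun j => alpha i * beta j) n <= alpha i * B).
    rewrite (sum_n_mult_l (K := R_Ring)); apply Rmult_le_compat_l; [apply Ha|].
    apply sum_n_le_Series; assumption. }
  destruct (ex_series_le (K := C_AbsRing) (V := C_CompleteNormedModule) U (fun i => alpha i * B))
    as [l Hl].
  - intros i; change (Cmod (U i) <= alpha i * B); apply (is_Clim_seq_Cmod_le _ _ _ (HU i) (Hpart i)).
  - apply ex_series_scal_r; assumption.
  - exists l; split; [exact Hl|].
    set (t := fun N i => if (w * i <=? N)%nat then sum_n (u i) (N - w * i) else RtoC 0).
    assert (Hlim : is_Clim_seq (fun N => sum_n (t N) N) l).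
    { apply (tannery t U (fun i => alpha i * B)); [| |apply ex_series_scal_r; assumption | exact Hl].
      - intros i; apply (is_Clim_seq_incr_n _ (w * i)).
        apply (is_Clim_seq_ext_loc (fun N => sum_n (u i) N)); [|apply HU].
        exists O; intros N _; unfold t; destruct (Nat.leb_spec (w * i) (N + w * i)); [|lia].
        f_equal; lia.
      - intros N i; unfold t; destruct (Nat.leb_spec (w * i) N); [apply Hpart|].
        rewrite Cmod_0; apply Rmult_le_pos; [apply Ha | exact HB]. }
    eapply is_Clim_seq_ext_loc; [|exact Hlim].
    exists O; intros N _; symmetry; apply sum_n_diag_sum, hw.
Qed.

(** * A Chu-Vandermonde identity *)

Fixpoint pochhammer (w : C) (k : nat) : C :=
  match k with
  | O => 1%C
  | S k' => (pochhammer w k' * (w + RtoC (INR k')))%C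
  end.

Lemma pochhammer_S_l (w : C) (k : nat) : pochhammer w (S k) = (w * pochhammer (w + 1) k)%C.
Proof.
  induction k as [|k IH]; cbn [pochhammer] in *.
  - rewrite INR_0; ring.
  - rewrite IH, S_INR, RtoC_plus; ring.
Qed.

(* Unlike [Binomial.C], this vanishes for k > n, so Pascal's rule holds without side conditions. *)
Fixpoint binom (n k : nat) : R :=
  match n, k with
  | _, O => 1
  | O, S _ => 0
  | S n', S k' => binom n' k' + binom n' (S k')
  end.

Lemma binom_0_r (n : nat) : binom n 0 = 1.
Proof. destruct n; reflexivity. Qed.

Lemma binom_gt (n k : nat) : (n < k)%nat -> binom n k = 0.
Proof.
  revert k; induction n as [|n IH]; intros k hk; destruct k; try lia; [reflexivity|].
  simpl; rewrite !IH by lia; ring.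
Qed.

Lemma binom_fact (n k : nat) : (k <= n)%nat ->
  binom n k * INR (fact k) * INR (fact (n - k)) = INR (fact n).
Proof.
  revert k; induction n as [|n IH]; intros k hk.
  - replace k with O by lia; simpl; ring.
  - destruct k as [|k]; [rewrite binom_0_r, Nat.sub_0_r; simpl; ring|].
    assert (H1 : binom n k * INR (fact k) * INR (fact (n - k)) = INR (fact n)) by (apply IH; lia).
    assert (H2 : binom n (S k) * INR (fact (S k)) * INR (fact (n - k)) = (INR n - INR k) * INR (fact n)).
    { destruct (Nat.eq_dec k n) as [->|hne].
      - rewrite binom_gt by lia; ring.
      - replace (n - k)%nat with (S (n - S k)) by lia; rewrite (fact_simpl (n - S k)), mult_INR.
        replace (INR (S (n - S k))) with (INR n - INR k) by (rewrite <- minus_INR by lia; f_equal; lia).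
        rewrite <- (IH (S k)) by lia; ring. }
    simpl binom; replace (S n - S k)%nat with (n - k)%nat by lia.
    rewrite (fact_simpl n), mult_INR, S_INR.
    transitivity ((INR k + 1) * (binom n k * INR (fact k) * INR (fact (n - k)))
                  + binom n (S k) * INR (fact (S k)) * INR (fact (n - k))).
    + rewrite fact_simpl, mult_INR, S_INR; ring.
    + rewrite H1, H2; ring.
Qed.

Fixpoint falling (n r : nat) : R :=
  match r with
  | O => 1
  | S r' => falling n r' * (INR n - INR r')
  end.

Lemma falling_fact (n r : nat) : (r <= n)%nat -> falling n r * INR (fact (n - r)) = INR (fact n).
Proof.
  induction r as [|r IH]; intros hr; simpl falling.
  - rewrite Nat.sub_0_r; ring.
  - rewrite <- IH by lia; replace (n - r)%nat with (S (n - S r)) by lia.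
    rewrite fact_simpl, mult_INR.
    replace (INR (S (n - S r))) with (INR n - INR r) by (rewrite <- minus_INR by lia; f_equal; lia).
    ring.
Qed.

Lemma falling_gt (n r : nat) : (n < r)%nat -> falling n r = 0.
Proof.
  induction r as [|r IH]; intros hr; [lia|]; simpl falling.
  destruct (Nat.eq_dec n r) as [->|hne]; [ring|]; rewrite IH by lia; ring.
Qed.

Lemma pochhammer_vandermonde (m : nat) : forall (c : C) (n : nat),
  pochhammer (c + RtoC (INR n)) m =
  sum_n (fun r => RtoC (binom m r * falling n r) * pochhammer (c + RtoC (INR r)) (m - r))%C m.
Proof.
  induction m as [|m IH]; intros c n.
  - rewrite sum_O; cbn [pochhammer binom falling]; simpl Nat.sub; cbn [pochhammer].
    rewrite Rmult_1_l; ring.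
  - set (A := fun r => (RtoC (binom m r * falling n r) * pochhammer (c + RtoC (INR r)) (S m - r))%C).
    set (B := fun r => (RtoC (binom m r * falling n (S r)) * pochhammer (c + RtoC (INR (S r))) (m - r))%C).
    set (t := fun r => (RtoC (binom (S m) r * falling n r) * pochhammer (c + RtoC (INR r)) (S m - r))%C).
    rewrite pochhammer_S_l; replace (c + RtoC (INR n) + 1)%C with ((c + 1) + RtoC (INR n))%C by ring.
    rewrite IH, <- sum_n_Cmult_l.
    (* c + n = (c + r) + (n - r) *)
    rewrite (sum_n_ext_loc _ (fun r => plus (A r) (B r))).
    2:{ intros r hr; unfold A, B; replace (S m - r)%nat with (S (m - r)) by lia.
        rewrite pochhammer_S_l; cbn [falling]; rewrite S_INR, !RtoC_mult, RtoC_minus, RtoC_plus.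
        change (mult ?a ?b) with (a * b)%C; change (plus ?a ?b) with (a + b)%C.
        replace (c + 1 + RtoC (INR r))%C with (c + RtoC (INR r) + 1)%C by ring.
        replace (c + (RtoC (INR r) + RtoC 1))%C with (c + RtoC (INR r) + 1)%C by ring; Cring. }
    rewrite sum_n_plus.
    assert (HA : sum_n A m = plus (A O) (sum_n (fun r => A (S r)) m)).
    { rewrite <- sum_n_succ_l; symmetry; apply sum_n_zero_tail; [lia|].
      intros r hr; replace r with (S m) by lia; unfold A.
      rewrite binom_gt, Rmult_0_l by lia; change zero with (RtoC 0); Cring. }
    assert (Ht : sum_n t (S m) = plus (A O) (sum_n (fun r => plus (B r) (A (S r))) m)).
    { rewrite sum_n_succ_l; f_equal; [unfold A, t; rewrite !binom_0_r; reflexivity|].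
      apply sum_n_ext; intros r; unfold A, B, t; cbn [binom].
      replace (S m - S r)%nat with (m - r)%nat by lia; rewrite !RtoC_mult, RtoC_plus; Cring. }
    rewrite HA, Ht, sum_n_plus; Cring.
Qed.

Lemma binom_falling_fact (m n r : nat) : (r <= m)%nat -> (r <= n)%nat ->
  binom m r * falling n r / (INR (fact m) * INR (fact n)) =
  / (INR (fact r) * INR (fact (m - r)) * INR (fact (n - r))).
Proof.
  intros hm hn; rewrite <- (binom_fact m r hm), <- (falling_fact n r hn).
  pose proof (INR_fact_lt_0 r); pose proof (INR_fact_lt_0 (m - r)); pose proof (INR_fact_lt_0 (n - r)).
  assert (binom m r <> 0).
  { intros E; pose proof (binom_fact m r hm) as Hb; rewrite E in Hb; pose proof (INR_fact_lt_0 m); lra. }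
  assert (falling n r <> 0).
  { intros E; pose proof (falling_fact n r hn) as Hf; rewrite E in Hf; pose proof (INR_fact_lt_0 n); lra. }
  field; repeat split; lra.
Qed.

(** * Products of weighted exponential series *)

(* The series of [gexp_term G a] is exp a for G = 1, and (y/2)^-nu J_nu(y) for
   G k = 1/Gamma(nu + k + 1) and a = -(y/2)^2. *)
Definition gexp_term (G : nat -> C) (a : R) (k : nat) : C := (RtoC (a ^ k / INR (fact k)) * G k)%C.

Section GeneralizedExponential.

Variable G : nat -> C.
Variable MG : R.
Hypothesis hMG : forall j, Cmod (G j) <= MG.

Lemma Cmod_gexp_term_le (a : R) (k : nat) :
  Cmod (gexp_term G a k) <= MG * (Rabs a ^ k / INR (fact k)).
Proof.
  unfold gexp_term; rewrite Cmod_mult, Cmod_R, Rmult_comm.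
  rewrite Rabs_div, <- RPow_abs, (Rabs_pos_eq (INR (fact k))) by (pose proof (INR_fact_lt_0 k); lra).
  apply Rmult_le_compat_r; [|apply hMG].
  apply Rdiv_le_0_compat; [apply pow_le, Rabs_pos | apply INR_fact_lt_0].
Qed.

Lemma ex_series_exp_bound (a : R) : ex_series (fun k => MG * (Rabs a ^ k / INR (fact k))).
Proof.
  apply (ex_series_scal_l (K := R_AbsRing) (V := R_NormedModule) MG (fun k => Rabs a ^ k / INR (fact k))).
  eexists; apply is_series_exp.
Qed.

Lemma is_series_gexp (a : R) : is_series (gexp_term G a) (CSeries (gexp_term G a)).
Proof.
  destruct (ex_series_le (K := C_AbsRing) (V := C_CompleteNormedModule) (gexp_term G a)
              (fun k => MG * (Rabs a ^ k / INR (fact k)))) as [l Hl].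
  - intros k; apply Cmod_gexp_term_le.
  - apply ex_series_exp_bound.
  - rewrite (CSeries_correct _ _ Hl); exact Hl.
Qed.

End GeneralizedExponential.

Section RisingRecurrence.

Variable c : C.
Variable G : nat -> C.
Hypothesis hG : forall j, G j = ((c + RtoC (INR j)) * G (S j))%C.

Lemma G_pochhammer (j k : nat) : G j = (pochhammer (c + RtoC (INR j)) k * G (j + k)%nat)%C.
Proof.
  induction k as [|k IH]; cbn [pochhammer].
  - rewrite Nat.add_0_r; ring.
  - rewrite IH, (hG (j + k)), Nat.add_succ_r, plus_INR, RtoC_plus; ring.
Qed.

Lemma G_mul (m n : nat) :
  (G m * G n * RtoC (/ (INR (fact m) * INR (fact n))))%C =
  (G (m + n) * sum_n (fun r => if (r <=? n)%nat
       then G r * RtoC (/ (INR (fact r) * INR (fact (m - r)) * INR (fact (n - r))))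
       else RtoC 0) m)%C.
Proof.
  rewrite (G_pochhammer n m), pochhammer_vandermonde, (Nat.add_comm n m).
  transitivity (G (m + n) * sum_n (fun r =>
     G m * RtoC (binom m r * falling n r / (INR (fact m) * INR (fact n)))
         * pochhammer (c + RtoC (INR r)) (m - r)) m)%C.
  - symmetry; rewrite (sum_n_ext _ (fun r => G m * RtoC (/ (INR (fact m) * INR (fact n)))
        * (RtoC (binom m r * falling n r) * pochhammer (c + RtoC (INR r)) (m - r)))%C).
    + rewrite sum_n_Cmult_l; ring.
    + intros r; unfold Rdiv; rewrite !RtoC_mult; Cring.
  - f_equal; apply sum_n_ext_loc; intros r hr.
    destruct (Nat.leb_spec r n).
    + rewrite binom_falling_fact by lia; rewrite (G_pochhammer r (m - r)).
      replace (r + (m - r))%nat with m by lia; Cring.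
    + rewrite falling_gt by lia; rewrite Rmult_0_r; unfold Rdiv; rewrite Rmult_0_l; Cring.
Qed.

Variables A B : R.

(* The coefficient of A^m B^(d-m) contributed by the index r: both sides of the degree-d
   identity are double sums of it, over (m, r) and over (r, m) respectively. *)
Let tri (d r m : nat) : C :=
  if andb (r <=? m)%nat (r <=? d - m)%nat
  then (RtoC (A ^ m * B ^ (d - m) / (INR (fact r) * INR (fact (m - r)) * INR (fact (d - m - r))))
        * (G r * G d))%C
  else RtoC 0.

Lemma gexp_term_mul_tri (d m : nat) : (m <= d)%nat ->
  (gexp_term G A m * gexp_term G B (d - m))%C = sum_n (fun r => tri d r m) d.
Proof.
  intros hm; unfold gexp_term.
  transitivity (RtoC (A ^ m * B ^ (d - m))
                * (G m * G (d - m) * RtoC (/ (INR (fact m) * INR (fact (d - m))))))%C.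
  { unfold Rdiv; rewrite Rinv_mult, !RtoC_mult; ring. }
  rewrite G_mul, Nat.add_comm, Nat.sub_add by exact hm.
  rewrite (sum_n_zero_tail _ (fun r => tri d r m) m d hm).
  2:{ intros r hr; unfold tri; destruct (Nat.leb_spec r m); [lia | reflexivity]. }
  rewrite Cmult_assoc, <- sum_n_Cmult_l; apply sum_n_ext_loc; intros r hr.
  unfold tri; destruct (Nat.leb_spec r m); [|lia]; destruct (Nat.leb_spec r (d - m)); cbn [andb].
  - unfold Rdiv; rewrite !RtoC_mult; Cring.
  - Cring.
Qed.

Lemma gexp_series_term_tri (d r : nat) :
  (if (2 * r <=? d)%nat
   then gexp_term G (A * B) r * gexp_term (fun k => G (2 * r + k)%nat) (A + B) (d - 2 * r)
   else RtoC 0)%C = sum_n (fun m => tri d r m) d.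
Proof.
  destruct (Nat.leb_spec (2 * r) d) as [hd|hd].
  - set (k := (d - 2 * r)%nat); replace (2 * r + k)%nat with d by lia.
    rewrite (sum_n_zero_tail _ _ (r + k) d) by (lia || (intros m hm; unfold tri;
      destruct (Nat.leb_spec r (d - m)); [lia | rewrite Bool.andb_false_r; reflexivity])).
    rewrite sum_n_zero_head
      by (intros m hm; unfold tri; destruct (Nat.leb_spec r m); [lia | reflexivity]).
    unfold gexp_term; rewrite binomial_div_fact, RtoC_sum_n; replace (2 * r + k)%nat with d by lia.
    transitivity (sum_n (fun j => RtoC ((A * B) ^ r / INR (fact r)) * G r * G d
                    * RtoC (A ^ j * B ^ (k - j) / (INR (fact j) * INR (fact (k - j)))))%C k).
    { rewrite sum_n_Cmult_l; ring. }
    apply sum_n_ext_loc; intros j hj; unfold tri.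
    destruct (Nat.leb_spec r (r + j)), (Nat.leb_spec r (d - (r + j))); try lia; cbn [andb].
    replace (d - (r + j))%nat with (r + (k - j))%nat by lia.
    replace (r + j - r)%nat with j by lia; replace (r + (k - j) - r)%nat with (k - j)%nat by lia.
    transitivity (RtoC ((A * B) ^ r / INR (fact r)
                        * (A ^ j * B ^ (k - j) / (INR (fact j) * INR (fact (k - j))))) * (G r * G d))%C;
      [rewrite RtoC_mult; Cring|].
    pose proof (INR_fact_lt_0 r); pose proof (INR_fact_lt_0 j); pose proof (INR_fact_lt_0 (k - j)).
    do 2 f_equal; rewrite !pow_add, Rpow_mult_distr; field; lra.
  - transitivity (sum_n (fun _ : nat => RtoC 0) d).
    + symmetry; exact (sum_n_m_const_zero (G := C_AbelianMonoid) 0 d).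
    + apply sum_n_ext_loc; intros m hm; unfold tri.
      destruct (Nat.leb_spec r m), (Nat.leb_spec r (d - m)); try reflexivity; lia.
Qed.

Lemma diag_sum_gexp_term (d : nat) :
  diag_sum 1 (fun i k => gexp_term G A i * gexp_term G B k)%C d =
  diag_sum 2 (fun r k => gexp_term G (A * B) r * gexp_term (fun k => G (2 * r + k)%nat) (A + B) k)%C d.
Proof.
  unfold diag_sum; transitivity (sum_n (fun m => sum_n (fun r => tri d r m) d) d).
  - apply sum_n_ext_loc; intros m hm; rewrite Nat.mul_1_l.
    destruct (Nat.leb_spec m d); [apply gexp_term_mul_tri; lia | lia].
  - rewrite sum_n_switch; apply sum_n_ext_loc; intros r _; symmetry; apply gexp_series_term_tri.
Qed.

End RisingRecurrence.

Section ProductFormula.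

Variable c : C.
Variable G : nat -> C.
Hypothesis hG : forall j, G j = ((c + RtoC (INR j)) * G (S j))%C.
Variable MG : R.
Hypothesis hMG : forall j, Cmod (G j) <= MG.

Let exp_bound (a : R) (k : nat) : R := MG * (Rabs a ^ k / INR (fact k)).

Let exp_bound_nonneg (a : R) (k : nat) : 0 <= exp_bound a k.
Proof.
  apply Rmult_le_pos; [eapply Rle_trans; [apply Cmod_ge_0 | apply (hMG O)]|].
  apply Rdiv_le_0_compat; [apply pow_le, Rabs_pos | apply INR_fact_lt_0].
Qed.

Let Cmod_gexp_term_mul_le (r : nat) (a b : R) (i k : nat) :
  Cmod (gexp_term G a i * gexp_term (fun j => G (r + j)%nat) b k) <= exp_bound a i * exp_bound b k.
Proof.
  rewrite Cmod_mult; apply Rmult_le_compat; try apply Cmod_ge_0; apply Cmod_gexp_term_le;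
    intros j; apply hMG.
Qed.

Theorem gexp_series_mul (A B : R) :
  is_series (fun r => gexp_term G (A * B) r * CSeries (gexp_term (fun k => G (2 * r + k)%nat) (A + B)))%C
            (CSeries (gexp_term G A) * CSeries (gexp_term G B))%C.
Proof.
  assert (HGshift : forall r j, Cmod (G (r + j)%nat) <= MG) by (intros; apply hMG).
  destruct (is_series_diag_sum 1 (fun i k => gexp_term G A i * gexp_term (fun j => G (0 + j)%nat) B k)%C
              (fun i => gexp_term G A i * CSeries (gexp_term G B))%C (exp_bound A) (exp_bound B)
              ltac:(lia) (exp_bound_nonneg A) (exp_bound_nonneg B) (Cmod_gexp_term_mul_le 0 A B)
              (ex_series_exp_bound MG A) (ex_series_exp_bound MG B))
    as [l1 [HU1 Hd1]].
  { intros i; apply (is_series_scal_l (K := C_AbsRing) (V := C_NormedModule)), (is_series_gexp _ _ hMG). }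
  destruct (is_series_diag_sum 2
              (fun r k => gexp_term G (A * B) r * gexp_term (fun j => G (2 * r + j)%nat) (A + B) k)%C
              (fun r => gexp_term G (A * B) r * CSeries (gexp_term (fun k => G (2 * r + k)%nat) (A + B)))%C
              (exp_bound (A * B)) (exp_bound (A + B)) ltac:(lia) (exp_bound_nonneg _) (exp_bound_nonneg _)
              (fun r => Cmod_gexp_term_mul_le (2 * r) (A * B) (A + B) r)
              (ex_series_exp_bound MG _) (ex_series_exp_bound MG _))
    as [l2 [HU2 Hd2]].
  { intros r; apply (is_series_scal_l (K := C_AbsRing) (V := C_NormedModule)).
    exact (is_series_gexp (fun k => G (2 * r + k)%nat) MG (HGshift (2 * r)%nat) (A + B)). }
  replace (CSeries (gexp_term G A) * CSeries (gexp_term G B))%C with l2; [exact HU2|].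
  transitivity l1.
  - apply (is_series_unique_C _ _ _ Hd2).
    eapply is_series_ext; [|exact Hd1]; apply diag_sum_gexp_term with (c := c); exact hG.
  - apply (is_series_unique_C _ _ _ HU1), is_series_Cmult_r, (is_series_gexp _ _ hMG).
Qed.

End ProductFormula.

Lemma BesselJ_gexp (nu : C) (y : R) :
  BesselJ nu y =
  (Rcpow (y / 2) nu * CSeries (gexp_term (fun k => rgamma (nu + RtoC (INR (S k)))) (- (y / 2) ^ 2)))%C.
Proof.
  unfold BesselJ; f_equal; apply CSeries_ext; intros k; unfold gexp_term; f_equal; f_equal.
  rewrite pow_mult; replace (- (y / 2) ^ 2) with (-1 * (y / 2) ^ 2) by ring.
  rewrite Rpow_mult_distr; unfold Rdiv; ring.
Qed.

Lemma BesselJ_shift_gexp (nu : C) (y : R) (n : nat) : 0 < y ->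
  BesselJ (nu + RtoC (INR n)) y =
  (Rcpow (y / 2) nu * RtoC ((y / 2) ^ n)
   * CSeries (gexp_term (fun k => rgamma (nu + RtoC (INR (S (n + k))))) (- (y / 2) ^ 2)))%C.
Proof.
  intros hy; rewrite BesselJ_gexp, Rcpow_add, Rcpow_INR by lra.
  f_equal; apply CSeries_ext; intros k; unfold gexp_term; do 2 f_equal.
  rewrite !S_INR, plus_INR, !RtoC_plus; ring.
Qed.

Lemma BesselJ_product_term (nu : C) (a b x s : R) (r : nat) :
  0 < a -> 0 < b -> 0 < x -> 0 < s -> s ^ 2 = a ^ 2 + b ^ 2 ->
  let G := fun j => rgamma (nu + RtoC (INR (S j))) in
  (Rcpow (a * x / 2) nu * Rcpow (b * x / 2) nu
   * (gexp_term G (- (a * x / 2) ^ 2 * - (b * x / 2) ^ 2) r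
      * CSeries (gexp_term (fun k => G (2 * r + k)%nat) (- (a * x / 2) ^ 2 + - (b * x / 2) ^ 2))))%C =
  (Rcpow (a * b * x / (2 * s)) nu
   * (RtoC ((a * b * x / (2 * s)) ^ (2 * r) / INR (fact r))
      * (rgamma (nu + RtoC (INR (S r))) * BesselJ (nu + RtoC (INR (2 * r))) (x * s))))%C.
Proof.
  intros ha hb hx hs hs2 G; set (t := a * b * x / (2 * s)).
  assert (ht0 : 0 < t) by (unfold t; apply Rdiv_lt_0_compat; [apply Rmult_lt_0_compat|]; nra).
  assert (ht : t * (x * s / 2) = a * x / 2 * (b * x / 2)) by (unfold t; field; lra).
  rewrite BesselJ_shift_gexp by nra.
  replace (- (x * s / 2) ^ 2) with (- (a * x / 2) ^ 2 + - (b * x / 2) ^ 2)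
    by (replace ((x * s / 2) ^ 2) with (x ^ 2 * s ^ 2 / 4) by field; rewrite hs2; field).
  assert (Hpow : (Rcpow (a * x / 2) nu * Rcpow (b * x / 2) nu = Rcpow t nu * Rcpow (x * s / 2) nu)%C).
  { rewrite <- !Rcpow_mul, ht; [reflexivity | ..]; first [lra | apply Rdiv_lt_0_compat; nra]. }
  assert (Hr : (- (a * x / 2) ^ 2 * - (b * x / 2) ^ 2) ^ r / INR (fact r)
               = t ^ (2 * r) / INR (fact r) * (x * s / 2) ^ (2 * r)).
  { replace (- (a * x / 2) ^ 2 * - (b * x / 2) ^ 2) with ((t * (x * s / 2)) ^ 2) by (rewrite ht; ring).
    rewrite <- pow_mult, Rpow_mult_distr; field; apply INR_fact_neq_0. }
  unfold gexp_term at 1; rewrite Hpow, Hr, RtoC_mult; unfold G; ring.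
Qed.

Theorem mainTheorem12 (nu : C) (a b x : R) (ha : 0 < a) (hb : 0 < b) (hx : 0 < x) :
  is_series
    (fun r : nat =>
       Cmult (Rcpow (a * b * x / (2 * sqrt (a ^ 2 + b ^ 2))) nu)
         (Cmult (RtoC ((a * b * x / (2 * sqrt (a ^ 2 + b ^ 2))) ^ (2 * r) / INR (fact r)))
           (Cmult (rgamma (Cplus nu (RtoC (INR (S r)))))
                  (BesselJ (Cplus nu (RtoC (INR (2 * r)))) (x * sqrt (a ^ 2 + b ^ 2))))))
    (Cmult (BesselJ nu (a * x)) (BesselJ nu (b * x))).
Proof.
  set (s := sqrt (a ^ 2 + b ^ 2)); set (G := fun j => rgamma (nu + RtoC (INR (S j)))).
  set (A := - (a * x / 2) ^ 2); set (B := - (b * x / 2) ^ 2).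
  destruct (rgamma_shift_bounded nu) as [MG HMG].
  pose proof (gexp_series_mul (nu + 1) G (rgamma_shift_rec nu) MG HMG A B) as H.
  apply (is_series_Cmult_l (Rcpow (a * x / 2) nu * Rcpow (b * x / 2) nu)) in H.
  rewrite !BesselJ_gexp; fold G A B.
  replace (Rcpow (a * x / 2) nu * CSeries (gexp_term G A)
           * (Rcpow (b * x / 2) nu * CSeries (gexp_term G B)))%C
    with (Rcpow (a * x / 2) nu * Rcpow (b * x / 2) nu
          * (CSeries (gexp_term G A) * CSeries (gexp_term G B)))%C
    by ring.
  eapply is_series_ext; [|exact H]; intros r.
  apply BesselJ_product_term; try assumption; [apply sqrt_lt_R0 | apply pow2_sqrt]; nra.
Qed.
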